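(* Let $(A,\mathcal N,\mathcal P,\lambda)$ be a game and $(\sigma,\phi)$ a uniform strategy on it. Then the set $\mathcal S_\phi(\sigma)$ of all bijections $\theta:x\cong y$ between configurations of $\sigma$ such that $\theta$ is the restriction to $x$ of $\phi_\alpha$ for some $\alpha\in\mathcal N$ (with $y=\phi_\alpha(x)$) is an isomorphism family on the event structure $\sigma$, and $p_\sigma$ is a map of event structures with symmetry $(\sigma,\mathcal S_\phi(\sigma))\to(A,\mathcal S)$, where $\mathcal S$ is the closure under composition of $\mathcal S_{\mathcal N}(A)\cup\mathcal S_{\mathcal P}(A)$.
   Context: Event structure: a set with a partial order $\leq$ with finitely many elements below each element, an irreflexive symmetric hereditary conflict $\#$ (if $a\leq a'$, $a\#b$ then $a'\#b$), and polarity into $\{-,+\}$. Configurations: finite down-closed conflict-free subsets, $\mathrm{Conf}(\cdot)$. $x\subseteq^+y$ (resp. $\subseteq^-$): $x\subseteq y$ with $y\setminus x$ all positive (resp. negative). Map of event structures: polarity-preserving function mapping configurations to configurations and injective on each configuration. Automorphism: bijection preserving and reflecting $\leq,\#$, polarity; it fixes $x$ if identity on $x$; negative if whenever it fixes $x$ and $x\subseteq^+y$ it fixes $y$; positive likewise with $\subseteq^-$. Group actions are homomorphisms into automorphism groups. A game $(A,\mathcal N,\mathcal P,\lambda)$: $\mathcal N$ a group acting on $A$ by negative automorphisms, $\mathcal P$ by positive automorphisms, $\lambda:\mathcal N\times\mathcal P\to\mathcal P\times\mathcal N$ with (i) $\lambda(e,\beta)=(\beta,e)$, $\lambda(\alpha,e)=(e,\alpha)$;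 (ii) if $\lambda(\alpha',\beta)=(\beta_1,\alpha_1)$, $\lambda(\alpha,\beta_1)=(\beta_2,\alpha_2)$ then $\lambda(\alpha\alpha',\beta)=(\beta_2,\alpha_2\alpha_1)$; (iii) if $\lambda(\alpha,\beta)=(\beta_1,\alpha_1)$, $\lambda(\alpha_1,\beta')=(\beta_2,\alpha_2)$ then $\lambda(\alpha,\beta\beta')=(\beta_1\beta_2,\alpha_2)$; (iv) if $\lambda(\alpha,\beta)=(\beta',\alpha')$ then $\alpha(\beta(a))=\beta'(\alpha'(a))$ for all $a$. For a group $G$ acting on $A$, $\mathcal S_G(A)$ is the set of bijections $x\cong g(x)$ ($x\in\mathrm{Conf}(A)$, $g\in G$) obtained by restricting $g$ to $x$. A strategy on $A$ is an event structure $\sigma$ with a map $p_\sigma:\sigma\to A$ such that for every $x\in\mathrm{Conf}(\sigma)$: if $p_\sigma(x)\subseteq^-z$ there is a unique $y\in\mathrm{Conf}(\sigma)$ with $x\subseteq y$, $p_\sigma(y)=z$; if $z\subseteq^+p_\sigma(x)$ there is $y\subseteq x$ in $\mathrm{Conf}(\sigma)$ with $p_\sigma(y)=z$. A weak map $\sigma\to\tau$ is a map $f$ with elements $f[x]\in\mathcal P$ ($x\in\mathrm{Conf}(\sigma)$) such that $f[x](p_\tau(f(s)))=p_\sigma(s)$ for $s\in x$. $\alpha\cdot\sigma$ is $\sigma$ with projection $\alpha\circ p_\sigma$. A uniform strategy is a strategy $\sigma$ with weak maps $\phi_\alpha:\alpha\cdot\sigma\to\sigma$ ($\alpha\in\mathcal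 N$) such that for all $x\in\mathrm{Conf}(\sigma)$: $\phi_e(x)=x$, $\phi_e[x]=e$; and for all $\alpha,\alpha'\in\mathcal N$, with $y=\phi_\alpha(x)$ and $(\gamma,\beta)=\lambda(\alpha',\phi_\alpha[x])$: $\phi_{\alpha'\alpha}(x)=\phi_\beta(y)$ and $\phi_{\alpha'\alpha}[x]=\gamma\,\phi_\beta[y]$. An isomorphism family on an event structure $E$ is a set $\mathcal S$ of polarity-preserving bijections between configurations, containing all identities, closed under composition and inverses, such that for $\theta:x\cong y$ in $\mathcal S$: restrictions of $\theta$ to subconfigurations $x'\subseteq x$ are in $\mathcal S$, and for every configuration $x'\supseteq x$ there is $\theta':x'\cong y'$ in $\mathcal S$ restricting to $\theta$ on $x$. A map of event structures with symmetry $(E,\mathcal S_E)\to(F,\mathcal S_F)$ is a map of event structures $f:E\to F$ such that for every $\theta:x\cong y$ in $\mathcal S_E$, the bijection $f(x)\cong f(y)$, $f(a)\mapsto f(\theta(a))$, is in $\mathcal S_F$. *)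

From Stdlib Require Import List.

Record ES := {
  ev   : Type;
  leq  : ev -> ev -> Prop;
  cfl  : ev -> ev -> Prop;
  pol  : ev -> bool;                (* true = +, false = - *)
  leq_refl  : forall a, leq a a;
  leq_antis : forall a b, leq a b -> leq b a -> a = b;
  leq_trans : forall a b c, leq a b -> leq b c -> leq a c;
  fin_causes : forall a, exists l : list ev, forall b, leq b a -> In b l;
  cfl_irrefl : forall a, ~ cfl a a;
  cfl_sym : forall a b, cfl a b -> cfl b a;
  cfl_hered : forall a a' b, leq a a' -> cfl a b -> cfl a' b
}.

Definition set_eq {T} (x y : T -> Prop) := forall a, x a <-> y a.
Definition subset {T} (x y : T -> Prop) := forall a, x a -> y a.
Definition image {T U} (f : T -> U) (x : T -> Prop) : U -> Prop :=
  fun b => exists a, x a /\ f a = b.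

Definition conf (E : ES) (x : ev E -> Prop) : Prop :=
  (exists l : list (ev E), forall a, x a -> In a l) /\
  (forall a b, x a -> leq E b a -> x b) /\
  (forall a b, x a -> x b -> ~ cfl E a b).

Definition subpos (E : ES) (x y : ev E -> Prop) :=
  subset x y /\ forall a, y a -> ~ x a -> pol E a = true.
Definition subneg (E : ES) (x y : ev E -> Prop) :=
  subset x y /\ forall a, y a -> ~ x a -> pol E a = false.

Definition es_map (E F : ES) (f : ev E -> ev F) : Prop :=
  (forall a, pol F (f a) = pol E a) /\
  forall x, conf E x ->
    conf F (image f x) /\ (forall a b, x a -> x b -> f a = f b -> a = b).

Definition automorphism (E : ES) (g : ev E -> ev E) : Prop :=
  (exists h : ev E -> ev E, (forall a, h (g a) = a) /\ (forall a, g (h a) = a)) /\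
  (forall a b, leq E (g a) (g b) <-> leq E a b) /\
  (forall a b, cfl E (g a) (g b) <-> cfl E a b) /\
  (forall a, pol E (g a) = pol E a).

Definition fixes (E : ES) (g : ev E -> ev E) (x : ev E -> Prop) :=
  forall a, x a -> g a = a.

Definition negative_aut (E : ES) (g : ev E -> ev E) :=
  automorphism E g /\
  forall x y, conf E x -> conf E y -> fixes E g x -> subpos E x y -> fixes E g y.
Definition positive_aut (E : ES) (g : ev E -> ev E) :=
  automorphism E g /\
  forall x y, conf E x -> conf E y -> fixes E g x -> subneg E x y -> fixes E g y.

Record Group := {
  gcar : Type;
  gmul : gcar -> gcar -> gcar;
  gone : gcar;
  ginv : gcar -> gcar;
  gmulA : forall a b c, gmul a (gmul b c) = gmul (gmul a b) c;
  gmul1l : forall a, gmul gone a = a;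
  gmul1r : forall a, gmul a gone = a;
  gmulVl : forall a, gmul (ginv a) a = gone;
  gmulVr : forall a, gmul a (ginv a) = gone
}.

Definition action (G : Group) (E : ES) (act : gcar G -> ev E -> ev E) : Prop :=
  (forall g, automorphism E (act g)) /\
  (forall a, act (gone G) a = a) /\
  (forall g h a, act (gmul G g h) a = act g (act h a)).

Record Game := {
  gA : ES;
  gN : Group;
  gP : Group;
  actN : gcar gN -> ev gA -> ev gA;
  actP : gcar gP -> ev gA -> ev gA;
  lam : gcar gN -> gcar gP -> gcar gP * gcar gN;
  actN_action : action gN gA actN;
  actN_neg : forall al, negative_aut gA (actN al);
  actP_action : action gP gA actP;
  actP_pos : forall be, positive_aut gA (actP be);
  lam_e_l : forall be, lam (gone gN) be = (be, gone gN);
  lam_e_r : forall al, lam al (gone gP) = (gone gP, al);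
  lam_mulN : forall al al' be be1 al1 be2 al2,
      lam al' be = (be1, al1) -> lam al be1 = (be2, al2) ->
      lam (gmul gN al al') be = (be2, gmul gN al2 al1);
  lam_mulP : forall al be be' be1 al1 be2 al2,
      lam al be = (be1, al1) -> lam al1 be' = (be2, al2) ->
      lam al (gmul gP be be') = (gmul gP be1 be2, al2);
  lam_act : forall al be be' al', lam al be = (be', al') ->
      forall a, actN al (actP be a) = actP be' (actN al' a)
}.

Definition strategy (A sigma : ES) (p : ev sigma -> ev A) : Prop :=
  es_map sigma A p /\
  (forall x, conf sigma x ->
     (forall z, conf A z -> subneg A (image p x) z ->
        (exists y, conf sigma y /\ subset x y /\ set_eq (image p y) z) /\
        (forall y1 y2, conf sigma y1 -> subset x y1 -> set_eq (image p y1) z ->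
                       conf sigma y2 -> subset x y2 -> set_eq (image p y2) z ->
                       set_eq y1 y2)) /\
     (forall z, conf A z -> subpos A z (image p x) ->
        exists y, conf sigma y /\ subset y x /\ set_eq (image p y) z)).

(* weak map  al.sigma -> sigma  (al.sigma has projection actN al o p) *)
Definition weak_map_act (Gm : Game) (sigma : ES) (p : ev sigma -> ev (gA Gm))
    (al : gcar (gN Gm)) (f : ev sigma -> ev sigma)
    (fb : (ev sigma -> Prop) -> gcar (gP Gm)) : Prop :=
  es_map sigma sigma f /\
  forall x, conf sigma x -> forall s, x s ->
    actP Gm (fb x) (p (f s)) = actN Gm al (p s).

Definition uniform (Gm : Game) (sigma : ES) (p : ev sigma -> ev (gA Gm))
    (phi : gcar (gN Gm) -> ev sigma -> ev sigma)
    (phib : gcar (gN Gm) -> (ev sigma -> Prop) -> gcar (gP Gm)) : Prop :=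
  strategy (gA Gm) sigma p /\
  (forall al, weak_map_act Gm sigma p al (phi al) (phib al)) /\
  (forall x, conf sigma x ->
     set_eq (image (phi (gone (gN Gm))) x) x /\ phib (gone (gN Gm)) x = gone (gP Gm)) /\
  (forall x, conf sigma x -> forall al al',
     let y := image (phi al) x in
     let gb := lam Gm al' (phib al x) in
     set_eq (image (phi (gmul (gN Gm) al' al)) x) (image (phi (snd gb)) y) /\
     phib (gmul (gN Gm) al' al) x = gmul (gP Gm) (fst gb) (phib (snd gb) y)).

(* A bijection theta : x ≅ y is represented by (x, y, theta) where only the
   values of theta on x matter. *)
Definition pbij (E : ES) (x y : ev E -> Prop) (th : ev E -> ev E) : Prop :=
  conf E x /\ conf E y /\
  (forall a, x a -> y (th a)) /\
  (forall a b, x a -> x b -> th a = th b -> a = b) /\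
  (forall b, y b -> exists a, x a /\ th a = b) /\
  (forall a, x a -> pol E (th a) = pol E a).

Definition iso_family (E : ES) (S : (ev E -> Prop) -> (ev E -> Prop) -> (ev E -> ev E) -> Prop) : Prop :=
  (forall x y th, S x y th -> pbij E x y th) /\
  (forall x, conf E x -> S x x (fun a => a)) /\
  (forall x y z th th', S x y th -> S y z th' -> S x z (fun a => th' (th a))) /\
  (forall x y th th', S x y th ->
     (forall b, y b -> x (th' b) /\ th (th' b) = b) -> S y x th') /\
  (forall x y th x', S x y th -> conf E x' -> subset x' x -> S x' (image th x') th) /\
  (forall x y th x', S x y th -> conf E x' -> subset x x' ->
     exists y' th', S x' y' th' /\ forall a, x a -> th' a = th a).

Definition sym_map (E F : ES)
    (SE : (ev E -> Prop) -> (ev E -> Prop) -> (ev E -> ev E) -> Prop)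
    (SF : (ev F -> Prop) -> (ev F -> Prop) -> (ev F -> ev F) -> Prop)
    (f : ev E -> ev F) : Prop :=
  es_map E F f /\
  forall x y th, SE x y th ->
    forall g : ev F -> ev F, (forall a, x a -> g (f a) = f (th a)) ->
      SF (image f x) (image f y) g.

Definition S_act (G : Group) (E : ES) (act : gcar G -> ev E -> ev E)
    (x y : ev E -> Prop) (th : ev E -> ev E) : Prop :=
  conf E x /\ exists g, set_eq y (image (act g) x) /\ forall a, x a -> th a = act g a.

Inductive S_game (Gm : Game) : (ev (gA Gm) -> Prop) -> (ev (gA Gm) -> Prop) ->
    (ev (gA Gm) -> ev (gA Gm)) -> Prop :=
| SgN : forall x y th, S_act (gN Gm) (gA Gm) (actN Gm) x y th -> S_game Gm x y th
| SgP : forall x y th, S_act (gP Gm) (gA Gm) (actP Gm) x y th -> S_game Gm x y th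
| Sgcomp : forall x y y' z th1 th2 th, S_game Gm x y th1 -> S_game Gm y' z th2 ->
    set_eq y y' -> (forall a, x a -> th a = th2 (th1 a)) -> S_game Gm x z th.

Definition S_phi (Gm : Game) (sigma : ES)
    (phi : gcar (gN Gm) -> ev sigma -> ev sigma)
    (x y : ev sigma -> Prop) (th : ev sigma -> ev sigma) : Prop :=
  conf sigma x /\ exists al, set_eq y (image (phi al) x) /\ forall s, x s -> th s = phi al s.

(* Everything rests on one rigidity fact: the projection [p] is injective on
   configurations, so two events of a configuration with the same image in [A]
   coincide.  The weak-map equations compute [p (phi al s)] as
   [actP (phib al x)^-1 (actN al (p s))], and the coherence axiom of [lam] then
   shows that the set-level identity [phi_(al' al) x = phi_be (phi_al x)] of
   uniformity holds pointwise.  With [phi_1 = id] on configurations this yields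
   composites and inverses of the bijections in [S_phi], and projecting
   [phi_al] restricted to [x] gives the composite of [actN al] and
   [actP (phib al x)^-1], an element of the game's symmetry. *)
From Stdlib Require Import List.

Section Images.
Variables T U V : Type.

Lemma set_eq_sym (x y : T -> Prop) : set_eq x y -> set_eq y x.
Proof. intros H a; symmetry; apply H. Qed.

Lemma set_eq_trans (x y z : T -> Prop) : set_eq x y -> set_eq y z -> set_eq x z.
Proof. intros Hxy Hyz a; rewrite (Hxy a); apply Hyz. Qed.

Lemma image_set_eq (f : T -> U) (x y : T -> Prop) :
  set_eq x y -> set_eq (image f x) (image f y).
Proof. intros H b; split; intros [a [Ha <-]]; exists a; split; auto; apply H, Ha. Qed.

Lemma image_ext_in (f g : T -> U) (x : T -> Prop) :
  (forall a, x a -> f a = g a) -> set_eq (image f x) (image g x).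
Proof.
  intros H b; split; intros [a [Ha <-]]; exists a; split; auto; rewrite H; auto.
Qed.

Lemma image_comp (f : U -> V) (g : T -> U) (x : T -> Prop) :
  set_eq (image f (image g x)) (image (fun a => f (g a)) x).
Proof.
  intros c; split.
  - intros [b [[a [Ha <-]] <-]]; exists a; auto.
  - intros [a [Ha <-]]; exists (g a); split; [exists a|]; auto.
Qed.

Lemma image_id (x : T -> Prop) : set_eq (image (fun a => a) x) x.
Proof. intros a; split; [intros [b [Hb <-]]; exact Hb | intros Ha; exists a; auto]. Qed.

End Images.

Lemma conf_set_eq (E : ES) (x y : ev E -> Prop) : conf E x -> set_eq x y -> conf E y.
Proof.
  intros [[l Hl] [Hdown Hcfl]] Hxy; split; [|split].
  - exists l; intros a Ha; apply Hl, Hxy, Ha.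
  - intros a b Ha Hba; apply Hxy, (Hdown a b); [apply Hxy|]; auto.
  - intros a b Ha Hb; apply Hcfl; apply Hxy; auto.
Qed.

Lemma conf_image_aut (E : ES) (g : ev E -> ev E) (x : ev E -> Prop) :
  automorphism E g -> conf E x -> conf E (image g x).
Proof.
  intros [[h [_ Hgh]] [Hleq [Hcfl _]]] [[l Hl] [Hdown Hconf]]; split; [|split].
  - exists (map g l); intros a [a0 [Ha0 <-]]; apply in_map, Hl, Ha0.
  - intros a b [a0 [Ha0 <-]] Hba; exists (h b); split; [|apply Hgh].
    apply (Hdown a0); auto; apply Hleq; rewrite Hgh; exact Hba.
  - intros a b [a0 [Ha0 <-]] [b0 [Hb0 <-]] Hab.
    exact (Hconf a0 b0 Ha0 Hb0 (proj1 (Hcfl a0 b0) Hab)).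
Qed.

Section GroupAction.
Variables (G : Group) (E : ES) (act : gcar G -> ev E -> ev E).
Hypothesis act_action : action G E act.

Lemma action_one a : act (gone G) a = a.
Proof. apply act_action. Qed.

Lemma action_mul g h a : act (gmul G g h) a = act g (act h a).
Proof. apply act_action. Qed.

Lemma action_invK g a : act (ginv G g) (act g a) = a.
Proof. rewrite <- action_mul, gmulVl; apply action_one. Qed.

Lemma action_inj g a b : act g a = act g b -> a = b.
Proof. intros H; rewrite <- (action_invK g a), H; apply action_invK. Qed.

End GroupAction.

(* Compatibility of [lam] with products in [P], applied to [be^-1 * be = 1]. *)
Lemma lam_snd_inv (Gm : Game) al be :
  snd (lam Gm (snd (lam Gm al (ginv (gP Gm) be))) be) = al.
Proof.
  destruct (lam Gm al (ginv (gP Gm) be)) as [be1 al1] eqn:H1.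
  destruct (lam Gm al1 be) as [be2 al2] eqn:H2; simpl.
  pose proof (lam_mulP Gm _ _ _ _ _ _ _ H1 H2) as H.
  rewrite gmulVl, lam_e_r in H; injection H; intros; subst; rewrite H2; reflexivity.
Qed.

Section SPhi.
Variables (Gm : Game) (sigma : ES) (phi : gcar (gN Gm) -> ev sigma -> ev sigma).

Lemma S_phi_pbij x y th :
  (forall al, es_map sigma sigma (phi al)) ->
  S_phi Gm sigma phi x y th -> pbij sigma x y th.
Proof.
  intros Hmap [Hx [al [Hy Hth]]].
  destruct (Hmap al) as [Hpol Hconf]; destruct (Hconf x Hx) as [Hcy Hinj].
  split; [exact Hx|split; [|split; [|split; [|split]]]].
  - exact (conf_set_eq _ _ _ Hcy (set_eq_sym _ _ _ Hy)).
  - intros a Ha; apply Hy; exists a; rewrite Hth; auto.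
  - intros a b Ha Hb Hab; rewrite !Hth in Hab; auto.
  - intros b Hb; apply Hy in Hb; destruct Hb as [a [Ha <-]]; exists a; rewrite Hth; auto.
  - intros a Ha; rewrite Hth; auto.
Qed.

Lemma S_phi_restrict x y th x' :
  S_phi Gm sigma phi x y th -> conf sigma x' -> subset x' x ->
  S_phi Gm sigma phi x' (image th x') th.
Proof.
  intros [_ [al [_ Hth]]] Hx' Hsub; split; [exact Hx'|].
  exists al; split.
  - apply image_ext_in; intros s Hs; apply Hth, Hsub, Hs.
  - intros s Hs; apply Hth, Hsub, Hs.
Qed.

Lemma S_phi_extend x y th x' :
  S_phi Gm sigma phi x y th -> conf sigma x' -> subset x x' ->
  exists y' th', S_phi Gm sigma phi x' y' th' /\ forall a, x a -> th' a = th a.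
Proof.
  intros [_ [al [_ Hth]]] Hx' _.
  exists (image (phi al) x'), (phi al); split.
  - split; [exact Hx'|]; exists al; split; [intros a; tauto | auto].
  - intros a Ha; symmetry; auto.
Qed.

End SPhi.

Section Uniform.
Variables (Gm : Game) (sigma : ES) (p : ev sigma -> ev (gA Gm))
  (phi : gcar (gN Gm) -> ev sigma -> ev sigma)
  (phib : gcar (gN Gm) -> (ev sigma -> Prop) -> gcar (gP Gm)).
Hypothesis phi_uniform : uniform Gm sigma p phi phib.

Lemma p_es_map : es_map sigma (gA Gm) p.
Proof. apply phi_uniform. Qed.

Lemma phi_es_map al : es_map sigma sigma (phi al).
Proof. apply phi_uniform. Qed.

Lemma p_inj_conf x s t : conf sigma x -> x s -> x t -> p s = p t -> s = t.
Proof. intros Hx; apply (proj2 (proj2 p_es_map x Hx)). Qed.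

Lemma conf_image_phi al x : conf sigma x -> conf sigma (image (phi al) x).
Proof. intros Hx; apply (proj2 (phi_es_map al) x Hx). Qed.

Lemma p_phi al x s :
  conf sigma x -> x s -> actP Gm (phib al x) (p (phi al s)) = actN Gm al (p s).
Proof. intros Hx; apply (proj2 (proj1 (proj2 phi_uniform) al) x Hx). Qed.

Lemma p_phi_inv al x s : conf sigma x -> x s ->
  p (phi al s) = actP Gm (ginv (gP Gm) (phib al x)) (actN Gm al (p s)).
Proof.
  intros Hx Hs; rewrite <- (p_phi al x s Hx Hs).
  symmetry; apply action_invK, actP_action.
Qed.

Lemma phi_one x s : conf sigma x -> x s -> phi (gone (gN Gm)) s = s.
Proof.
  intros Hx Hs.
  destruct (proj1 (proj2 (proj2 phi_uniform)) x Hx) as [Himg Hphib].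
  apply (p_inj_conf x); auto.
  - apply Himg; exists s; auto.
  - pose proof (p_phi (gone (gN Gm)) x s Hx Hs) as H.
    rewrite Hphib, (action_one _ _ _ (actP_action Gm)),
      (action_one _ _ _ (actN_action Gm)) in H.
    exact H.
Qed.

(* The set-level identity of uniformity holds pointwise, because both events
   lie in the configuration [phi_(al' al) x] and have the same projection. *)
Lemma phi_mul x al al' s : conf sigma x -> x s ->
  phi (gmul (gN Gm) al' al) s = phi (snd (lam Gm al' (phib al x))) (phi al s).
Proof.
  intros Hx Hs.
  destruct (proj2 (proj2 (proj2 phi_uniform)) x Hx al al') as [Himg Hphib].
  cbv zeta in Himg, Hphib.
  destruct (lam Gm al' (phib al x)) as [be1 be] eqn:Hlam; simpl in *.
  assert (Hy : conf sigma (image (phi al) x)) by now apply conf_image_phi.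
  assert (Hys : image (phi al) x (phi al s)) by (exists s; auto).
  apply (p_inj_conf (image (phi (gmul (gN Gm) al' al)) x)).
  - now apply conf_image_phi.
  - exists s; auto.
  - apply Himg; exists (phi al s); auto.
  - apply (action_inj _ _ _ (actP_action Gm) (phib (gmul (gN Gm) al' al) x)).
    rewrite (p_phi _ x s Hx Hs), Hphib, (action_mul _ _ _ (actP_action Gm)),
      (p_phi be _ _ Hy Hys), <- (lam_act Gm _ _ _ _ Hlam), (p_phi al x s Hx Hs).
    apply action_mul, actN_action.
Qed.

Lemma phi_comp x al al' : conf sigma x ->
  exists g, forall s, x s -> phi g s = phi al' (phi al s).
Proof.
  intros Hx.
  exists (gmul (gN Gm) (snd (lam Gm al' (ginv (gP Gm) (phib al x)))) al).
  intros s Hs; rewrite (phi_mul x _ _ s Hx Hs), lam_snd_inv; reflexivity.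
Qed.

Lemma phi_inv x al : conf sigma x ->
  exists g, forall s, x s -> phi g (phi al s) = s.
Proof.
  intros Hx; exists (snd (lam Gm (ginv (gN Gm) al) (phib al x))).
  intros s Hs; rewrite <- (phi_mul x _ _ s Hx Hs), gmulVl; exact (phi_one x s Hx Hs).
Qed.

Lemma S_phi_id x : conf sigma x -> S_phi Gm sigma phi x x (fun a => a).
Proof.
  intros Hx; split; [exact Hx|]; exists (gone (gN Gm)); split.
  - apply set_eq_sym, phi_uniform, Hx.
  - intros s Hs; symmetry; exact (phi_one x s Hx Hs).
Qed.

Lemma S_phi_comp x y z th th' :
  S_phi Gm sigma phi x y th -> S_phi Gm sigma phi y z th' ->
  S_phi Gm sigma phi x z (fun a => th' (th a)).
Proof.
  intros [Hx [al [Hy Hth]]] [_ [al' [Hz Hth']]].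
  assert (Hxy : forall s, x s -> y (phi al s)) by (intros s Hs; apply Hy; exists s; auto).
  destruct (phi_comp x al al' Hx) as [g Hg].
  split; [exact Hx|]; exists g; split.
  - apply (set_eq_trans _ _ _ _ Hz), set_eq_sym.
    apply (set_eq_trans _ _ _ _ (image_ext_in _ _ _ _ _ Hg)).
    apply (set_eq_trans _ _ _ _ (set_eq_sym _ _ _ (image_comp _ _ _ _ _ _))).
    apply image_set_eq, set_eq_sym, Hy.
  - intros s Hs; rewrite Hg, Hth, Hth'; auto.
Qed.

Lemma S_phi_inv x y th th' :
  S_phi Gm sigma phi x y th -> (forall b, y b -> x (th' b) /\ th (th' b) = b) ->
  S_phi Gm sigma phi y x th'.
Proof.
  intros Hxy Hth'.
  pose proof (S_phi_pbij Gm sigma phi x y th phi_es_map Hxy) as [_ [Hyc _]].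
  destruct Hxy as [Hx [al [Hy Hth]]].
  destruct (phi_inv x al Hx) as [g Hg].
  split; [exact Hyc|]; exists g; split.
  - apply set_eq_sym.
    apply (set_eq_trans _ _ _ _ (image_set_eq _ _ _ _ _ Hy)).
    apply (set_eq_trans _ _ _ _ (image_comp _ _ _ _ _ _)).
    apply (set_eq_trans _ _ _ _ (image_ext_in _ _ _ _ _ Hg)), image_id.
  - intros t Ht; destruct (Hth' t Ht) as [Hx' Hthth'].
    apply Hy in Ht; destruct Ht as [s [Hs <-]].
    rewrite Hg by exact Hs.
    apply (proj2 (proj2 (phi_es_map al) x Hx)); auto.
    rewrite <- Hth; auto.
Qed.

Lemma S_phi_iso_family : iso_family sigma (S_phi Gm sigma phi).
Proof.
  split; [|split; [|split; [|split; [|split]]]].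
  - intros x y th; apply S_phi_pbij, phi_es_map.
  - exact S_phi_id.
  - exact S_phi_comp.
  - exact S_phi_inv.
  - exact (S_phi_restrict Gm sigma phi).
  - exact (S_phi_extend Gm sigma phi).
Qed.

Lemma p_sym_map : sym_map sigma (gA Gm) (S_phi Gm sigma phi) (S_game Gm) p.
Proof.
  split; [exact p_es_map|].
  intros x y th [Hx [al [Hy Hth]]] g Hg.
  set (be := ginv (gP Gm) (phib al x)).
  assert (Hpx : conf (gA Gm) (image p x)) by exact (proj1 (proj2 p_es_map x Hx)).
  set (y' := image (actN Gm al) (image p x)).
  apply (Sgcomp Gm _ y' y' _ (actN Gm al) (actP Gm be)).
  - apply SgN; split; [exact Hpx|]; exists al; split; [intros a; tauto | auto].
  - apply SgP; split.
    { apply conf_image_aut; [apply actN_action | exact Hpx]. }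
    exists be; split; [|auto].
    apply (set_eq_trans _ _ _ _ (image_set_eq _ _ _ _ _ Hy)).
    apply (set_eq_trans _ _ _ _ (image_comp _ _ _ _ _ _)).
    apply (set_eq_trans _ _ _ _ (image_ext_in _ _ _ _ _ (fun s => p_phi_inv al x s Hx))).
    apply set_eq_sym.
    apply (set_eq_trans _ _ _ _ (image_comp _ _ _ _ _ _)).
    exact (image_comp _ _ _ (fun a => actP Gm be (actN Gm al a)) p x).
  - intros a; tauto.
  - intros a [s [Hs <-]]; rewrite Hg, Hth by exact Hs; exact (p_phi_inv al x s Hx Hs).
Qed.

End Uniform.

Theorem mainTheorem7 (Gm : Game) (sigma : ES) (p : ev sigma -> ev (gA Gm))
    (phi : gcar (gN Gm) -> ev sigma -> ev sigma)
    (phib : gcar (gN Gm) -> (ev sigma -> Prop) -> gcar (gP Gm)) :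
  uniform Gm sigma p phi phib ->
  iso_family sigma (S_phi Gm sigma phi) /\
  sym_map sigma (gA Gm) (S_phi Gm sigma phi) (S_game Gm) p.
Proof.
  intros U; split; [exact (S_phi_iso_family _ _ _ _ _ U) | exact (p_sym_map _ _ _ _ _ U)].
Qed.
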